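(* Let $G$ be a graph with no edge $e$ satisfying $|F_e|\ge 4$, no induced chordless cycle on 4 vertices, and no induced path on at least 7 vertices, and let $u,v,w$ be an induced path on three vertices in $G$, with $B_i$, $E_1$ and $j$ defined from $u,v,w$ as in the context. If $j\ge 2$, then the induced subgraph $G[B_2\cup\cdots\cup B_j]$ (meaning $G[\bigcup_{i\ge2}B_i]$ if $j=\infty$) is a collection of at most $|E_1|$ vertex-disjoint paths, i.e., each of its connected components is a path (possibly a single vertex) and it has at most $|E_1|$ connected components.
   Context: All graphs are finite, simple and undirected. For an edge $e$ of $G$, $F_e$ denotes the set of all edges $e'$ of $G$ such that $V(e)\cup V(e')$ induces a path on three vertices in $G$. Let $u,v,w$ be an induced path on three vertices ($uv,vw\in E(G)$, $uw\notin E(G)$), and $A=\{u,v,w\}$. $B$ is the set of vertices not in $A$ with exactly one or two neighbors in $A$; $C$ is the set of vertices adjacent to all three vertices of $A$; $D$ is the set of vertices not in $A\cup B\cup C$ with at least one neighbor in $C$. For $i\ge1$, $B_i$ is the set of vertices $x\notin A\cup B\cup C\cup D$ whose distance in $G$ to the set $B$ is exactly $i$; $B_0=B$, $B_{-1}=A$. For $i\ge0$, $E_i$ is the set of edges with one endpoint in $B_i$ and the other in $B_{i+1}$. $j$ is the minimum index $i\ge0$ such that there is an edge $e\in E_i$ with $|F_e|\ge3$, and $j=\infty$ if no such index exists. *)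

From mathcomp Require Import all_boot.
Set Implicit Arguments. Unset Strict Implicit. Unset Printing Implicit Defensive.

(* A finite simple graph: vertex type T : finType, adjacency e : rel T,
   assumed symmetric and irreflexive (hypotheses of the theorem). *)

Definition edges (T : finType) (e : rel T) : {set {set T}} :=
  [set S : {set T} | [exists x, exists y, e x y && (S == [set x; y])]].

Definition induces_P3 (T : finType) (e : rel T) (X : {set T}) : bool :=
  [exists a, exists b, exists c,
     [&& X == [set a; b; c], a != b, b != c, a != c,
         e a b, e b c & ~~ e a c]].

Definition Fe (T : finType) (e : rel T) (S : {set T}) : {set {set T}} :=
  [set S' in edges e | induces_P3 e (S :|: S')].

Definition is_induced_path (T : finType) (e : rel T) (p : seq T) : Prop :=
  uniq p /\ forall (x0 : T) (i j : nat), i < size p -> j < size p ->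
    e (nth x0 p i) (nth x0 p j) = (i == j.+1) || (j == i.+1).

Definition has_induced_C4 (T : finType) (e : rel T) : Prop :=
  exists a b c d : T,
    [/\ uniq [:: a; b; c; d],
        [&& e a b, e b c, e c d & e d a] & ~~ e a c && ~~ e b d].

Definition nbhd (T : finType) (e : rel T) (x : T) : {set T} := [set y | e x y].

Section Construction.
Variables (T : finType) (e : rel T) (u v w : T).

Definition Aset : {set T} := [set u; v; w].
Definition Bset : {set T} :=
  [set x | (x \notin Aset) && (0 < #|nbhd e x :&: Aset| <= 2)].
Definition Cset : {set T} :=
  [set x | (x \notin Aset) && (#|nbhd e x :&: Aset| == 3)].
Definition Dset : {set T} :=
  [set x | (x \notin Aset :|: Bset :|: Cset) && [exists y in Cset, e x y]].

Definition reach (k : nat) (x : T) (Y : {set T}) : bool :=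
  [exists p : k.-tuple T, path e x p && (last x p \in Y)].

Definition dist_is (x : T) (Y : {set T}) (i : nat) : bool :=
  reach i x Y && [forall k : 'I_i, ~~ reach k x Y].

Definition Bi (i : nat) : {set T} :=
  if i is i'.+1 then
    [set x | (x \notin Aset :|: Bset :|: Cset :|: Dset) && dist_is x Bset i]
  else Bset.

Definition Ei (i : nat) : {set {set T}} :=
  [set S in edges e | [exists x, exists y,
      [&& S == [set x; y], x \in Bi i & y \in Bi i.+1]]].

Definition big_index (i : nat) : bool := [exists S in Ei i, 3 <= #|Fe e S|].

(* jo is the index j: Some m = the least i with an edge e in E_i, |F_e|>=3;
   None = infinity (no such index). *)
Definition is_j (jo : option nat) : Prop :=
  match jo with
  | Some m => big_index m /\ forall k, k < m -> ~~ big_index k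
  | None => forall i, ~~ big_index i
  end.

End Construction.

Definition le_ext (i : nat) (jo : option nat) : bool :=
  if jo is Some m then i <= m else true.

Definition induced_rel (T : finType) (e : rel T) (W : {set T}) : rel T :=
  [rel x y | [&& e x y, x \in W & y \in W]].

Definition components (T : finType) (e : rel T) (W : {set T}) : {set {set T}} :=
  [set [set y in W | connect (induced_rel e W) x y] | x in W].

Definition ge_ext (jo : option nat) (i : nat) : bool :=
  if jo is Some m then i <= m else true.

From mathcomp Require Import all_boot zify.
Set Implicit Arguments. Unset Strict Implicit. Unset Printing Implicit Defensive.

(* Every vertex x of B_(i+1) has a neighbour in B_i, its parent: x has no neighbour
   in C, nor in D, because for a neighbour y of x in D and c in C adjacent to y the
   set F_cy would contain cu, cv, cw and yx.  Every a in B_i also has a neighbour r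
   adjacent to no vertex of B_(i+1) (in A for i = 0, the parent of a otherwise), so
   when ab is an edge of E_i with |F_ab| <= 2, that is i < j, F_ab contains ar and
   b has at most one neighbour outside the closed neighbourhood of a.  Applied to
   a vertex x of B_i (2 <= i <= j) and its parent p, and to p, its parent and
   grandparent to see that the other neighbours of x in W are not adjacent to p,
   this shows that x has at most one neighbour in W besides p.  Hence G[W] has
   maximum degree 2 and no cycle (a vertex of least level on a cycle would have
   its parent on it), so its components are induced paths.  Following parents,
   every component meets B_2, and the edge from such a vertex to its parent is an
   edge of E_1 determining the component. *)

Lemma uniq_size_le_card (T : finType) (S : {set T}) (s : seq T) :
  uniq s -> {subset s <= S} -> size s <= #|S|.
Proof. by move=> us sS; rewrite -(card_uniqP us); apply/subset_leq_card/subsetP. Qed.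

Lemma set2_neq (T : finType) (a b c d x : T) :
  x \in [set a; b] -> x != c -> x != d -> [set a; b] != [set c; d].
Proof.
by move=> xab xc xd; apply: contraNneq xc => E; move: xab; rewrite E !inE (negbTE xd) orbF.
Qed.

Section Edges.
Variables (T : finType) (e : rel T).
Hypotheses (e_sym : symmetric e) (e_irr : irreflexive e).

Lemma edge_neq x y : e x y -> x != y.
Proof. by apply: contraTneq => ->; rewrite e_irr. Qed.

Lemma set2_in_edges a b : e a b -> [set a; b] \in edges e.
Proof.
by move=> eab; rewrite inE; apply/existsP; exists a; apply/existsP; exists b; rewrite eab eqxx.
Qed.

Lemma set2_in_Fe a b z : e a b -> e a z -> z != b -> ~~ e b z ->
  [set a; z] \in Fe e [set a; b].
Proof.
move=> eab eaz nzb nebz; rewrite inE set2_in_edges //=.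
apply/existsP; exists b; apply/existsP; exists a; apply/existsP; exists z.
rewrite (e_sym b a) eab eaz nebz [b == a]eq_sym (edge_neq eab) (edge_neq eaz).
rewrite [b == z]eq_sym nzb !andbT.
by apply/eqP/setP => t; rewrite !inE; case: (t == a); case: (t == b); case: (t == z).
Qed.

Lemma set2_in_Fe_r a b z : e a b -> e b z -> z != a -> ~~ e a z ->
  [set b; z] \in Fe e [set a; b].
Proof. by move=> eab; rewrite [[set a; b]]setUC; apply: set2_in_Fe; rewrite e_sym. Qed.

End Edges.

Section Components.
Variables (T : finType) (e : rel T) (W : {set T}).
Hypothesis e_sym : symmetric e.
Local Notation R := (induced_rel e W).
Local Notation comps := (components e W).

Lemma induced_rel_sym : symmetric R.
Proof. by move=> x y; rewrite /induced_rel /= e_sym [(x \in W) && _]andbC. Qed.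

Lemma components_sub K : K \in comps -> K \subset W.
Proof. by case/imsetP=> x _ ->; apply/subsetP => y; rewrite inE => /andP[]. Qed.

Lemma components_neq0 K : K \in comps -> K != set0.
Proof. by case/imsetP=> x xW ->; apply/set0Pn; exists x; rewrite inE xW connect0. Qed.

Lemma components_closed K y z : K \in comps -> y \in K -> z \in W -> e y z -> z \in K.
Proof.
case/imsetP=> x _ ->; rewrite !inE => /andP[yW cxy] zW eyz; rewrite zW.
by apply: connect_trans cxy (connect1 _); rewrite /induced_rel /= eyz yW.
Qed.

Lemma componentsE K x : K \in comps -> x \in K -> K = [set y in W | connect R x y].
Proof.
case/imsetP=> x0 _ ->; rewrite inE => /andP[_ c0]; apply/setP => y.
by rewrite !inE (same_connect (sym_connect_sym induced_rel_sym) c0).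
Qed.


Lemma components_closed_eq K (S : {set T}) x : K \in comps -> S \subset K -> x \in S ->
  (forall y z, y \in S -> z \in W -> e y z -> z \in S) -> S = K.
Proof.
move=> Kc /subsetP SK xS Scl; apply/setP => y; apply/idP/idP => [/SK //|].
have clS : closed R S.
  by move=> y1 y2 /and3P[e12 y1W y2W]; apply/idP/idP => /Scl; apply; rewrite // e_sym.
by rewrite (componentsE Kc (SK _ xS)) inE => /andP[_ /(closed_connect clS) <-].
Qed.

End Components.

Definition simple_path_in (T : finType) (e : rel T) (K : {set T}) (a : T) (r : seq T) :=
  [&& uniq (a :: r), (a :: r) \subset K & path e a r].

Lemma exists_longest_path (T : finType) (e : rel T) (K : {set T}) x : x \in K ->
  exists a r, simple_path_in e K a r /\
    forall a' r', simple_path_in e K a' r' -> size r' <= size r.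
Proof.
move=> xK; pose P n := [exists a, exists t : n.-tuple T, simple_path_in e K a t].
have P0 : P 0.
  apply/existsP; exists x; apply/existsP; exists [tuple].
  by rewrite /simple_path_in /= andbT; apply/subsetP => y; rewrite inE => /eqP ->.
have P_le n : P n -> n <= #|T|.
  case/existsP=> a /existsP[t /and3P[ut _ _]].
  by rewrite -(size_tuple t) ltnW // -[_.+1]/(size (a :: t)) -(card_uniqP ut) max_card.
have [n /existsP[a /existsP[t pt]] n_max] := ex_maxnP (ex_intro _ 0 P0) P_le.
exists a, t; split=> // a' r' p'; rewrite size_tuple; apply: n_max.
by apply/existsP; exists a'; apply/existsP; exists (in_tuple r').
Qed.

Section LevelledDegreeTwo.
Variables (T : finType) (e : rel T) (W : {set T}) (level : T -> nat -> bool).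
Hypotheses (e_sym : symmetric e) (e_irr : irreflexive e).
Hypothesis level_W : forall x, x \in W -> exists i, level x i.
Hypothesis parent_W : forall x, x \in W -> exists p,
  (forall i k, level x i -> level p k -> k < i) /\
  (forall y1 y2, y1 \in W -> y2 \in W -> e x y1 -> e x y2 -> y1 != p -> y2 != p -> y1 = y2).

Lemma no_three_nbrs x y1 y2 y3 : x \in W -> y1 \in W -> y2 \in W -> y3 \in W ->
  e x y1 -> e x y2 -> e x y3 -> y1 != y2 -> y1 != y3 -> y2 != y3 -> False.
Proof.
move=> xW y1W y2W y3W e1 e2 e3 n12 n13 n23.
have [p [_ p_uniq]] := parent_W xW.
have [y1p|n1p] := eqVneq y1 p.
  by case/negP: n23; apply/eqP; apply: p_uniq; rewrite // -y1p eq_sym.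
have [y2p|n2p] := eqVneq y2 p.
  by case/negP: n13; apply/eqP; apply: p_uniq; rewrite // -y2p eq_sym.
by case/negP: n12; apply/eqP; apply: p_uniq.
Qed.

Lemma degree2_subset_empty (C : {set T}) : C \subset W ->
  (forall y, y \in C -> exists y1 y2, [/\ y1 \in C, y2 \in C, y1 != y2, e y y1 & e y y2]) ->
  C = set0.
Proof.
move=> /subsetP CW C_deg2; apply/setP => y; rewrite inE; apply/negbTE/negP => yC.
have [n yn] := level_W (CW _ yC).
elim/ltn_ind: n y yn yC => n IH y yn yC.
have [p [p_lt p_uniq]] := parent_W (CW _ yC).
have [y1 [y2 [y1C y2C n12 e1 e2]]] := C_deg2 _ yC.
have pC : p \in C.
  have [<- //|n1p] := eqVneq y1 p; have [<- //|n2p] := eqVneq y2 p.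
  by case/negP: n12; apply/eqP; apply: p_uniq; rewrite ?CW.
have [k pk] := level_W (CW _ pC).
exact: IH (p_lt _ _ yn pk) p pk pC.
Qed.

Section LongestPath.
Variables (K : {set T}) (a : T) (r : seq T).
Hypothesis KW : K \subset W.
Hypothesis K_closed : forall y z, y \in K -> z \in W -> e y z -> z \in K.
Hypotheses (s_uniq : uniq (a :: r)) (s_sub : {subset a :: r <= K}) (s_path : path e a r).
Hypothesis s_longest : forall a' r', simple_path_in e K a' r' -> size r' <= size r.
Local Notation s := (a :: r).
Local Notation nb i := (nth a (a :: r) i).


Lemma longest_path_adj i : i.+1 < size s -> e (nb i) (nb i.+1).
Proof. exact: (pathP a s_path). Qed.

Lemma longest_path_inW i : i < size s -> nb i \in W.
Proof. by move=> ilt; apply: (subsetP KW); apply/s_sub/mem_nth. Qed.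

Lemma longest_path_nth_neq i j : i < size s -> j < size s -> i != j -> nb i != nb j.
Proof. by move=> ilt jlt; rewrite nth_uniq. Qed.

Lemma longest_path_closed x y : x \in s -> y \in W -> e x y -> y \in s.
Proof.
move=> xs yW exy; apply/negPn/negP => ys.
have yK : y \in K by apply: K_closed yW exy; apply: s_sub.
have ext_path (a' : T) (r' : seq T) : size r < size r' -> uniq (a' :: r') ->
    {subset a' :: r' <= y :: s} -> path e a' r' -> False.
  move=> lt u' sub' p'; suff /s_longest : simple_path_in e K a' r' by rewrite leqNgt lt.
  rewrite /simple_path_in u' p' andbT; apply/subsetP => t /sub'.
  by rewrite inE => /orP[/eqP ->|/s_sub].
have [i ilt x_nb] : exists2 i, i < size s & x = nb i.
  by exists (index x s); rewrite ?index_mem ?nth_index.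
rewrite {}x_nb in exy.
have [i_last|i_nlast] := eqVneq i (size r).
  apply: (ext_path a (rcons r y)); rewrite ?size_rcons //.
  - by rewrite -rcons_cons rcons_uniq ys s_uniq.
  - by move=> t; rewrite -rcons_cons mem_rcons.
  by rewrite rcons_path s_path /= (last_nth a) -i_last.
case: i ilt i_nlast exy => [_ _ eay|k klt k_nlast exy].
  apply: (ext_path y s) => //; first by rewrite cons_uniq ys s_uniq.
  by rewrite /= s_path andbT e_sym.
have k2lt : k.+2 < size s by rewrite /= ltnS ltn_neqAle k_nlast.
have k0lt : k < size s := ltnW klt.
apply: (no_three_nbrs (longest_path_inW klt) (longest_path_inW k0lt) (longest_path_inW k2lt) yW
  _ (longest_path_adj k2lt) exy).
- by rewrite e_sym (longest_path_adj klt).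
- by rewrite (longest_path_nth_neq k0lt k2lt) // ltn_eqF.
- by apply: contraNneq ys => <-; apply: mem_nth.
- by apply: contraNneq ys => <-; apply: mem_nth.
Qed.

Lemma longest_path_back_adj i : 0 < i -> i < size s -> e (nb i) (nb i.-1).
Proof. by case: i => // i _ ilt; rewrite e_sym longest_path_adj. Qed.

Lemma longest_path_not_cycle : 1 < size r -> ~~ e (nb 0) (nb (size r)).
Proof.
move=> r2; apply/negP => e_end; have size_s : size s = (size r).+1 by [].
have nb_deg2 k : k < size s -> exists k1 k2,
    [/\ k1 < size s, k2 < size s, k1 != k2, e (nb k) (nb k1) & e (nb k) (nb k2)].
  move=> klt; have [->|k_pos] := posnP k.
    exists 1, (size r); split => //; try lia.
    by apply: longest_path_adj; lia.
  have [k_last|k_nlast] := eqVneq k (size r).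
    exists k.-1, 0; split => //; try lia.
      by apply: longest_path_back_adj.
    by rewrite k_last e_sym.
  exists k.-1, k.+1; split; try lia.
    by apply: longest_path_back_adj.
  by apply: longest_path_adj; lia.
suff /setP/(_ a) : [set x in s] = set0 by rewrite !inE eqxx.
apply: degree2_subset_empty.
  by apply/subsetP => x; rewrite inE => /s_sub /(subsetP KW).
move=> y; rewrite inE => ys; have klt : index y s < size s by rewrite index_mem.
have [k1 [k2 [k1lt k2lt nk e1 e2]]] := nb_deg2 _ klt.
rewrite nth_index // in e1 e2.
by exists (nb k1), (nb k2); split; rewrite ?in_set ?mem_nth ?longest_path_nth_neq.
Qed.

Lemma longest_path_chord i j : i < j -> j < size s -> e (nb i) (nb j) = (j == i.+1).
Proof.
move=> ij jlt; have size_s : size s = (size r).+1 by [].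
have [ji|nj] := eqVneq j i.+1; first by rewrite ji longest_path_adj -?ji.
apply/negbTE/negP => eij.
have [i0|i_pos] := posnP i; last first.
  apply: (@no_three_nbrs (nb i) (nb i.-1) (nb i.+1) (nb j));
    rewrite ?longest_path_inW ?longest_path_nth_neq //; try lia.
    by apply: longest_path_back_adj; lia.
  by apply: longest_path_adj; lia.
move: eij; rewrite i0 e_sym => eji.
have [j_last|j_nlast] := eqVneq j (size r).
  by move: eji; rewrite e_sym j_last; apply/negP/longest_path_not_cycle; lia.
apply: (@no_three_nbrs (nb j) (nb j.-1) (nb j.+1) (nb 0));
  rewrite ?longest_path_inW ?longest_path_nth_neq //; try lia.
  by apply: longest_path_back_adj; lia.
by apply: longest_path_adj; lia.
Qed.

Lemma longest_path_induced : is_induced_path e s.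
Proof.
split=> // x0 i j ilt jlt; rewrite !(set_nth_default a x0) //.
case: (ltngtP i j) => [lt|gt|<-]; last by rewrite e_irr; case: eqP; lia.
- by rewrite longest_path_chord //; case: eqP; case: eqP; lia.
- by rewrite e_sym longest_path_chord //; case: eqP; case: eqP; lia.
Qed.

End LongestPath.

Lemma components_induced_path K : K \in components e W ->
  exists p, is_induced_path e p /\ [set x in p] = K.
Proof.
move=> Kc; have KW := components_sub Kc.
have K_closed := components_closed Kc.
have /set0Pn[x xK] := components_neq0 Kc.
have [a [r [/and3P[s_uniq /subsetP s_sub s_path] s_longest]]] := exists_longest_path e xK.
exists (a :: r); split; first exact: (longest_path_induced KW s_uniq s_sub s_path).
apply: (components_closed_eq e_sym Kc (x := a)) => [||y z].
- by apply/subsetP => y; rewrite in_set => /s_sub.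
- by rewrite in_set mem_head.
- by rewrite !in_set; exact: (longest_path_closed KW K_closed s_uniq s_sub s_path s_longest).
Qed.

End LevelledDegreeTwo.

Section Layers.
Variables (T : finType) (e : rel T).
Hypotheses (e_sym : symmetric e) (e_irr : irreflexive e).
Hypothesis small_Fe : forall S, S \in edges e -> #|Fe e S| < 4.
Variables (u v w : T).
Local Notation A := (Aset u v w).
Local Notation B := (Bset e u v w).
Local Notation C := (Cset e u v w).
Local Notation D := (Dset e u v w).
Local Notation L := (Bi e u v w).

Lemma reach0 x (Y : {set T}) : reach e 0 x Y = (x \in Y).
Proof.
apply/existsP/idP => [[t]|xY]; first by rewrite (tuple0 t).
by exists [tuple]; rewrite /= xY.
Qed.

Lemma reach_cons k x y (Y : {set T}) : e y x -> reach e k x Y -> reach e k.+1 y Y.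
Proof.
move=> eyx /existsP[t /andP[pt lt]]; apply/existsP; exists [tuple of x :: t].
by rewrite /= eyx pt.
Qed.

Lemma reachS k x (Y : {set T}) : reach e k.+1 x Y -> exists2 p, e x p & reach e k p Y.
Proof.
case/existsP=> -[[|p t] //= ht] /andP[/andP[exp pt] lt].
by exists p => //; apply/existsP; exists (Tuple (ht : size t == k)); rewrite /= pt lt.
Qed.

Lemma dist_is_uniq x (Y : {set T}) i k : dist_is e x Y i -> dist_is e x Y k -> i = k.
Proof.
move=> /andP[ri /forallP fi] /andP[rk /forallP fk].
case: (ltngtP i k) => // [ik|ki]; first by move: (fk (Ordinal ik)); rewrite ri.
by move: (fi (Ordinal ki)); rewrite rk.
Qed.

Lemma Bi_dist x i : x \in L i -> dist_is e x B i.
Proof.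
case: i => [xB|i]; last by rewrite inE => /andP[].
by rewrite /dist_is reach0 xB; apply/forallP => -[].
Qed.

Lemma Bi_uniq x i k : x \in L i -> x \in L k -> i = k.
Proof. by move=> /Bi_dist xi /Bi_dist xk; apply: dist_is_uniq xi xk. Qed.

Lemma Bi_edge x y i k : x \in L i -> y \in L k -> e x y -> k <= i.+1.
Proof.
move=> /Bi_dist/andP[rx _] /Bi_dist/andP[_ /forallP fy] exy.
rewrite leqNgt; apply/negP => ik; move: (fy (Ordinal ik)) => /=.
by rewrite (reach_cons _ rx) // e_sym.
Qed.

Lemma card_Aset_le3 : #|A| <= 3.
Proof. by rewrite /Aset (leq_trans (leq_card_setU _ _)) // cards2 cards1; case: (_ != _). Qed.

Lemma Bi_lt_neq x y i k : x \in L i -> y \in L k -> k < i -> x != y.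
Proof.
by move=> xi yk; apply: contraTneq => xy; rewrite -xy in yk; rewrite (Bi_uniq xi yk) ltnn.
Qed.

Lemma Bi_far_nadj x y i k : x \in L i -> y \in L k -> i.+1 < k -> ~~ e x y.
Proof. by move=> xi yk; apply: contraTN => /(Bi_edge xi yk); rewrite leqNgt. Qed.

Lemma notin_ABC_nadj_A x a : x \notin A -> x \notin B -> x \notin C -> a \in A -> ~~ e x a.
Proof.
move=> xA xB xC aA; apply/negP => exa.
have n_pos : 0 < #|nbhd e x :&: A| by apply/card_gt0P; exists a; rewrite in_setI aA andbT /nbhd inE.
have n_le3 : #|nbhd e x :&: A| <= 3.
  by apply: leq_trans (subset_leq_card (subsetIr _ _)) card_Aset_le3.
case: (leqP #|nbhd e x :&: A| 2) => n2; first by move: xB; rewrite inE xA n_pos n2.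
by move: xC; rewrite inE xA eqn_leq n_le3 n2.
Qed.

Lemma Bi_succ_notin i x : x \in L i.+1 -> [/\ x \notin A, x \notin B, x \notin C & x \notin D].
Proof. by rewrite /= inE 3!in_setU !negb_or -!andbA => /and5P[]. Qed.

Lemma Bi_succ_nbr_notin_C i x y : x \in L i.+1 -> e x y -> y \notin C.
Proof.
move=> xL exy; apply/negP => yC; have [xA xB xC /negP] := Bi_succ_notin xL; apply.
rewrite in_set 2!in_setU (negbTE xA) (negbTE xB) (negbTE xC).
by apply/existsP; exists y; rewrite yC exy.
Qed.

Lemma Cset_nbhd c : c \in C -> [/\ c \notin A, uniq [:: u; v; w] & [&& e c u, e c v & e c w]].
Proof.
rewrite inE => /andP[cA /eqP c_nbrs].
have nbhd_A : nbhd e c :&: A = A.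
  by apply/eqP; rewrite eqEcard subsetIr c_nbrs card_Aset_le3.
have adj_A a : a \in A -> e c a by rewrite -nbhd_A => /setIP[]; rewrite inE.
split => //; last by rewrite !adj_A // !inE eqxx ?orbT.
have AE : A = [set x in [:: u; v; w]] by apply/setP => x; rewrite !inE orbA.
by apply/card_uniqP/eqP; rewrite eqn_leq card_size -cardsE -AE -nbhd_A c_nbrs.
Qed.

Lemma Cset_edge_Fe_ge4 c y x : c \in C -> y \notin A -> y \notin B -> y \notin C ->
  e c y -> e y x -> x \notin C -> ~~ e c x -> 4 <= #|Fe e [set c; y]|.
Proof.
move=> cC yA yB yC ecy eyx xC nexc.
have [cA uvw /and3P[ecu ecv ecw]] := Cset_nbhd cC.
move: uvw; rewrite /= !inE !negb_or andbT => /andP[/andP[nuv nuw] nvw].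
have ncy : c != y by apply: contraNneq yC => <-.
have ncx : c != x by apply: contraNneq xC => <-.
have [nuc nvc nwc] : [/\ u != c, v != c & w != c].
  by split; apply: contraNneq cA => <-; rewrite !inE eqxx ?orbT.
have [nuy nvy nwy] : [/\ u != y, v != y & w != y].
  by split; apply: contraNneq yA => <-; rewrite !inE eqxx ?orbT.
have ny_A a : a \in A -> ~~ e y a by apply: notin_ABC_nadj_A.
apply: (@uniq_size_le_card _ _ [:: [set c; u]; [set c; v]; [set c; w]; [set y; x]]).
  rewrite /= !inE !negb_or !andbT.
  rewrite (set2_neq (set22 c u) nuc nuv) (set2_neq (set22 c u) nuc nuw).
  by rewrite (set2_neq (set22 c v) nvc nvw) !(set2_neq (set21 c _) ncy ncx).
move=> S; rewrite 4!in_cons in_nil orbF => /or4P[] /eqP ->.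
- by apply: (set2_in_Fe e_sym e_irr); rewrite // ny_A // !inE eqxx.
- by apply: (set2_in_Fe e_sym e_irr); rewrite // ny_A // !inE eqxx orbT.
- by apply: (set2_in_Fe e_sym e_irr); rewrite // ny_A // !inE eqxx orbT.
- by apply: (set2_in_Fe_r e_sym e_irr); rewrite // eq_sym.
Qed.

Lemma Bi_succ_nbr_notin_D i x y : x \in L i.+1 -> e x y -> y \notin D.
Proof.
move=> xL exy; apply/negP; rewrite in_set 2!in_setU !negb_or.
case/andP=> /andP[/andP[yA yB] yC] /existsP[c /andP[cC eyc]].
have [_ _ xC _] := Bi_succ_notin xL.
have nexc : ~~ e c x by apply: contraL cC => ecx; apply: Bi_succ_nbr_notin_C xL _; rewrite e_sym.
have ecy : e c y by rewrite e_sym.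
have eyx : e y x by rewrite e_sym.
have := small_Fe (set2_in_edges ecy).
by rewrite ltnNge (Cset_edge_Fe_ge4 cC yA yB yC ecy eyx xC nexc).
Qed.

Lemma Bi_parent i x : x \in L i.+1 -> exists2 p, e x p & p \in L i.
Proof.
move=> xL; have [xA xB xC _] := Bi_succ_notin xL.
have /andP[rx /forallP fx] := Bi_dist xL.
have [p exp rp] := reachS rx; exists p => //.
have fp (k : 'I_i) : ~~ reach e k p B.
  by apply: contra (fx (lift ord0 k)) => /(reach_cons exp).
case: i xL rx fx rp fp => [|i] xL rx fx rp fp; first by rewrite /= -reach0.
rewrite /= in_set /dist_is rp /=; apply/andP; split; last exact/forallP.
rewrite 3!in_setU !negb_or (Bi_succ_nbr_notin_D xL exp) (Bi_succ_nbr_notin_C xL exp) !andbT.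
apply/andP; split; first by apply: contraL exp => /(notin_ABC_nadj_A xA xB xC).
by apply: contra (fp ord0); rewrite reach0.
Qed.

Lemma Bi_far_nbr k a : a \in L k ->
  exists2 r, e a r & forall b, b \in L k.+1 -> (r != b) && ~~ e b r.
Proof.
case: k => [|k] aL.
  move: (aL); rewrite /= in_set => /andP[aA /andP[/card_gt0P[r /setIP[ear rA]] _]].
  exists r; first by move: ear; rewrite inE.
  move=> b bL; have [bA bB bC _] := Bi_succ_notin bL.
  by rewrite (notin_ABC_nadj_A bA bB bC rA) andbT; apply: contraNneq bA => <-.
have [r ear rL] := Bi_parent aL; exists r => // b bL; apply/andP; split.
  by rewrite eq_sym (Bi_lt_neq bL rL).
by rewrite e_sym (Bi_far_nadj rL bL).
Qed.

Lemma Ei_set2 k a b : a \in L k -> b \in L k.+1 -> e a b -> [set a; b] \in Ei e u v w k.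
Proof.
move=> aL bL eab; rewrite in_set set2_in_edges //=.
by apply/existsP; exists a; apply/existsP; exists b; rewrite eqxx aL bL.
Qed.

Lemma not_big_index_far_nbr_uniq k a b y1 y2 : ~~ big_index e u v w k ->
  a \in L k -> b \in L k.+1 -> e a b -> e b y1 -> e b y2 ->
  y1 != a -> y2 != a -> ~~ e a y1 -> ~~ e a y2 -> y1 = y2.
Proof.
move=> /existsP not_big aL bL eab eby1 eby2 ny1a ny2a nay1 nay2.
apply/eqP/negPn/negP => ny12; apply: not_big; exists [set a; b]; rewrite Ei_set2 //=.
have [r ear /(_ b bL) /andP[nrb nebr]] := Bi_far_nbr aL.
have nab := edge_neq e_irr eab; have ny1b : y1 != b by rewrite eq_sym (edge_neq e_irr).
apply: (@uniq_size_le_card _ _ [:: [set a; r]; [set b; y1]; [set b; y2]]).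
  rewrite /= !inE !negb_or !andbT (set2_neq (set22 b y1) ny1b ny12).
  by rewrite !(set2_neq (set21 a r) nab) // eq_sym.
move=> S; rewrite 3!in_cons in_nil orbF => /or3P[] /eqP ->.
- exact: (set2_in_Fe e_sym e_irr).
- exact: (set2_in_Fe_r e_sym e_irr).
- exact: (set2_in_Fe_r e_sym e_irr).
Qed.

End Layers.

Lemma le_ext_trans i k jo : i <= k -> le_ext k jo -> le_ext i jo.
Proof. by case: jo => //= m; apply: leq_trans. Qed.

Section LayersUpToJ.
Variables (T : finType) (e : rel T).
Hypotheses (e_sym : symmetric e) (e_irr : irreflexive e).
Hypothesis small_Fe : forall S, S \in edges e -> #|Fe e S| < 4.
Variables (u v w : T) (jo : option nat) (W : {set T}).
Hypothesis j_spec : is_j e u v w jo.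
Hypothesis W_spec : forall x, x \in W <->
  exists i, [/\ 2 <= i, le_ext i jo & x \in Bi e u v w i].
Local Notation L := (Bi e u v w).

Lemma not_big_index_below_j k i : le_ext i jo -> k < i -> ~~ big_index e u v w k.
Proof.
case: jo j_spec => [m [_ small_below] /= im ki|no_big _ _] //.
by apply: small_below; apply: leq_trans ki im.
Qed.

Lemma W_Bi_range y k : y \in W -> y \in L k -> 2 <= k /\ le_ext k jo.
Proof. by case/W_spec=> i [i2 ij yi] yk; rewrite -(Bi_uniq yi yk). Qed.

Lemma Bi_in_W y k : 2 <= k -> le_ext k jo -> y \in L k -> y \in W.
Proof. by move=> k2 kj yk; apply/W_spec; exists k. Qed.

Lemma W_nbr_nadj_parent n x p y : le_ext n.+2 jo -> x \in L n.+2 -> p \in L n.+1 ->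
  e x p -> y \in W -> e x y -> y != p -> ~~ e p y.
Proof.
move=> nj xL pL exp yW exy nyp; apply/negP => epy.
have [q epq qL] := Bi_parent e_sym e_irr small_Fe pL.
have [i [i2 _ yL]] := (W_spec y).1 yW.
have n_lt_i : n < i := Bi_edge e_sym yL xL (etrans (e_sym y x) exy).
have [eqp epx] : e q p /\ e p x by split; rewrite e_sym.
have q_far_nbr_uniq : ~~ e q y -> x = y.
  apply: (not_big_index_far_nbr_uniq e_sym e_irr small_Fe _ qL pL eqp epx epy).
  - by apply: (not_big_index_below_j nj).
  - by rewrite (Bi_lt_neq xL qL).
  - by rewrite (Bi_lt_neq yL qL).
  - by rewrite (Bi_far_nadj e_sym qL xL).
suff neqy : ~~ e q y by move: exy; rewrite (q_far_nbr_uniq neqy) e_irr.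
apply/negP => eqy; have i_eq : i = n.+1.
  by apply/eqP; rewrite eqn_leq (Bi_edge e_sym qL yL eqy) n_lt_i.
move: i2 yL; rewrite i_eq.
case: n nj xL pL qL {n_lt_i i_eq q_far_nbr_uniq} => [//|m] nj xL pL qL _ yL.
have [r eqr rL] := Bi_parent e_sym e_irr small_Fe qL.
have erq : e r q by rewrite e_sym.
have py : p = y.
  apply: (not_big_index_far_nbr_uniq e_sym e_irr small_Fe _ rL qL erq eqp eqy).
  - by apply: (not_big_index_below_j nj); rewrite !ltnS leqW.
  - by rewrite (Bi_lt_neq pL rL).
  - by rewrite (Bi_lt_neq yL rL).
  - by rewrite (Bi_far_nadj e_sym rL pL).
  - by rewrite (Bi_far_nadj e_sym rL yL).
by rewrite py eqxx in nyp.
Qed.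

Lemma W_parent x : x \in W -> exists p,
  (forall i k, x \in L i -> p \in L k -> k < i) /\
  (forall y1 y2, y1 \in W -> y2 \in W -> e x y1 -> e x y2 -> y1 != p -> y2 != p -> y1 = y2).
Proof.
case/W_spec=> i [i2 nj xL]; case: i i2 nj xL => [|[|n]] // _ nj xL.
have [p exp pL] := Bi_parent e_sym e_irr small_Fe xL; exists p; split.
  by move=> i k /(Bi_uniq xL) <- /(Bi_uniq pL) <-.
move=> y1 y2 y1W y2W exy1 exy2 ny1p ny2p.
have epx : e p x by rewrite e_sym.
apply: (not_big_index_far_nbr_uniq e_sym e_irr small_Fe _ pL xL epx exy1 exy2 ny1p ny2p).
- by apply: (not_big_index_below_j nj).
- exact: (W_nbr_nadj_parent nj xL pL exp y1W exy1 ny1p).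
- exact: (W_nbr_nadj_parent nj xL pL exp y2W exy2 ny2p).
Qed.

Lemma components_meet_B2 K : K \in components e W -> exists2 z, z \in K & z \in L 2.
Proof.
move=> Kc; have /set0Pn[x xK] := components_neq0 Kc.
have [i [i2 ij xL]] := (W_spec x).1 (subsetP (components_sub Kc) _ xK).
elim/ltn_ind: i x i2 ij xL xK => -[|[|[|n]]] // IH y _ nj yL yK; first by exists y.
have [p eyp pL] := Bi_parent e_sym e_irr small_Fe yL.
have pj : le_ext n.+2 jo by apply: le_ext_trans nj.
have pK : p \in K by apply: components_closed Kc yK (Bi_in_W _ pj pL) eyp.
by apply: (IH n.+2 _ p _ pj pL pK).
Qed.

Lemma card_components_le_E1 : #|components e W| <= #|Ei e u v w 1|.
Proof.
pose comp_of (S : {set T}) :=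
  if [pick x in S :&: W] is Some x then [set y in W | connect (induced_rel e W) x y] else set0.
suff /subset_leq_card/leq_trans : components e W \subset comp_of @: Ei e u v w 1.
  by apply; apply: leq_imset_card.
apply/subsetP => K Kc; have [z zK zL] := components_meet_B2 Kc.
have [p ezp pL] := Bi_parent e_sym e_irr small_Fe zL.
apply/imsetP; exists [set p; z]; first by apply: Ei_set2; rewrite // e_sym.
rewrite /comp_of; case: pickP => [x /setIP[] | /(_ z)]; last first.
  by rewrite !inE eqxx orbT (subsetP (components_sub Kc)).
rewrite !inE => /orP[/eqP-> /W_Bi_range/(_ pL)[] // | /eqP-> _].
exact: componentsE.
Qed.

End LayersUpToJ.

Unset Implicit Arguments.

Theorem corollary2 (T : finType) (e : rel T)
  (e_sym : symmetric e) (e_irr : irreflexive e)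
  (noF4 : forall S, S \in edges e -> #|Fe e S| < 4)
  (noC4 : ~ has_induced_C4 e)
  (noP7 : ~ exists p : seq T, 7 <= size p /\ is_induced_path e p)
  (u v w : T) (huv : e u v) (hvw : e v w) (huw : ~~ e u w)
  (jo : option nat) (hj : is_j e u v w jo)
  (hj2 : ge_ext jo 2)
  (W : {set T})
  (hW : forall x, x \in W <->
          exists i, [/\ 2 <= i, le_ext i jo & x \in Bi e u v w i]) :
  (forall K, K \in components e W ->
     exists p : seq T, is_induced_path e p /\ [set x in p] = K)
  /\ #|components e W| <= #|Ei e u v w 1|.
Proof.
split; last exact: (card_components_le_E1 e_sym e_irr noF4 hW).
move=> K; apply: (components_induced_path e_sym e_irr (level := fun x i => x \in Bi e u v w i)).
  by move=> x /hW[i [_ _ xi]]; exists i.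
exact: (W_parent e_sym e_irr noF4 hj hW).
Qed.
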